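(* Let $p$ be an odd prime and $s\in\mathbb{Z}_p$ with $-2s=1$. For $x_1,x_2,y_1,y_2,w,v\in\mathbb{Z}_p$ consider the system in unknowns $(b_1,b_2)\in\mathbb{Z}_p^2$: $$b_1x_1+sb_1(1-b_1)y_1+b_2x_2+sb_2(1-b_2)y_2=w,\qquad b_1y_1+b_2y_2=v,$$ and let $\Delta:=(2wy_1+vy_1-v^2-2vx_1)(y_1+y_2)y_2+(vy_2+x_1y_2-x_2y_1)^2$. If $y_1,y_2,y_1+y_2\neq0$, then the system has exactly two solutions when $\Delta$ is a nonzero square in $\mathbb{Z}_p$, namely $b_1=\frac{vy_1+x_2y_1-x_1y_2\pm\sqrt\Delta}{y_1(y_1+y_2)}$, $b_2=\frac{vy_2+x_1y_2-x_2y_1\mp\sqrt\Delta}{y_2(y_1+y_2)}$; exactly one solution when $\Delta=0$; and none when $\Delta$ is a nonsquare. Moreover, if $(x_1,x_2,y_1,y_2,w,v)$ is uniformly random in $\mathbb{Z}_p^6$ and $\eta$ denotes the number of solutions, then conditioned on $y_1,y_2,y_1+y_2\neq0$ we have $\Pr(\eta=0)=\Pr(\eta=2)=\frac12-\frac1{2p}$ and $\Pr(\eta=1)=\frac1p$. *)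

From mathcomp Require Import all_boot all_order all_algebra.
Set Implicit Arguments. Unset Strict Implicit. Unset Printing Implicit Defensive.
Import Order.TTheory GRing.Theory Num.Theory.
Local Open Scope ring_scope.

(* Z_p is modelled as 'F_p (p an odd prime is assumed in the theorem). *)

Definition solset (p : nat) (s x1 x2 y1 y2 w v : 'F_p) : {set 'F_p * 'F_p} :=
  [set b : 'F_p * 'F_p |
     (b.1 * x1 + s * b.1 * (1 - b.1) * y1 + b.2 * x2 + s * b.2 * (1 - b.2) * y2 == w)
     && (b.1 * y1 + b.2 * y2 == v)].

Definition Delta (p : nat) (x1 x2 y1 y2 w v : 'F_p) : 'F_p :=
  (2 * w * y1 + v * y1 - v ^+ 2 - 2 * v * x1) * (y1 + y2) * y2
  + (v * y2 + x1 * y2 - x2 * y1) ^+ 2.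

Definition is_square (p : nat) (a : 'F_p) : Prop := exists r : 'F_p, r ^+ 2 = a.

Definition eta (p : nat) (s x1 x2 y1 y2 w v : 'F_p) : nat :=
  #|solset s x1 x2 y1 y2 w v|.

Definition tup (p : nat) : finType := ('F_p * 'F_p * 'F_p * 'F_p * 'F_p * 'F_p)%type.

Definition condev (p : nat) : {set tup p} :=
  [set t : tup p | let: (x1, x2, y1, y2, w, v) := t in
     [&& y1 != 0, y2 != 0 & y1 + y2 != 0]].

Definition eta_ev (p : nat) (s : 'F_p) (k : nat) : {set tup p} :=
  [set t : tup p | let: (x1, x2, y1, y2, w, v) := t in
     eta s x1 x2 y1 y2 w v == k].

Definition cond_prob (p : nat) (s : 'F_p) (k : nat) : rat :=
  (#|eta_ev s k :&: condev p|%:R) / (#|condev p|%:R).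

From mathcomp Require Import all_boot all_order all_algebra ring zify.
Import Order.TTheory GRing.Theory Num.Theory.
Set Implicit Arguments.
Unset Strict Implicit.
Unset Printing Implicit Defensive.
Local Open Scope ring_scope.

(* Solving the linear equation for b2 and using s = -1/2 to complete the square,
   the quadratic equation becomes (y1 (y1 + y2) b1 - (v y1 + x2 y1 - x1 y2))^2 = Delta,
   so solutions correspond bijectively to square roots of Delta: two, one or none.
   Given y1, y2, y1 + y2 <> 0, Delta is affine in w with slope 2 y1 y2 (y1 + y2) <> 0,
   hence uniformly distributed on Z_p; there 0 has one square root, while the
   (p - 1)/2 nonzero squares have two each and the (p - 1)/2 nonsquares none. *)

Lemma two_neq0_of_half (R : nzRingType) (s : R) : - (2 * s) = 1 -> 2 != 0 :> R.
Proof.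
move=> hs; apply/eqP => h2; move: hs.
by rewrite h2 mul0r oppr0 => /eqP; rewrite eq_sym oner_eq0.
Qed.

Section SquareRoots.
Variable F : finFieldType.

Definition sqrts (d : F) : {set F} := [set r | r ^+ 2 == d].

Lemma sqrts_sqr (r : F) : sqrts (r ^+ 2) = [set r; - r].
Proof. by apply/setP => x; rewrite !inE eqf_sqr. Qed.

Lemma sqrts0 : sqrts 0 = [set 0].
Proof. by apply/setP => x; rewrite !inE expf_eq0. Qed.

Lemma sqrts_nonsquare (d : F) : (forall r, r ^+ 2 != d) -> sqrts d = set0.
Proof. by move=> nsq; apply/setP => r; rewrite !inE (negbTE (nsq r)). Qed.

Lemma card_sqrts_sqr (r : F) : 2 != 0 :> F -> r != 0 -> #|sqrts (r ^+ 2)| = 2%N.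
Proof.
move=> h2 r_neq0; rewrite sqrts_sqr cards2.
by rewrite -subr_eq0 opprK -mulr2n -mulr_natl mulf_neq0.
Qed.

Lemma card_sqrts (d : F) : 2 != 0 :> F ->
  #|sqrts d| = if d == 0 then 1%N else if [exists r, r ^+ 2 == d] then 2%N else 0%N.
Proof.
move=> h2; have [->|d_neq0] := eqVneq d 0; first by rewrite sqrts0 cards1.
case: existsP => [[r /eqP hr] | nsq]; last first.
  by rewrite sqrts_nonsquare ?cards0 // => r; apply/negP => hr; apply: nsq; exists r.
rewrite -hr card_sqrts_sqr //; apply: contraNneq d_neq0 => r0.
by rewrite -hr r0 expr0n.
Qed.

Lemma sum_card_sqrts : (\sum_(d : F) #|sqrts d|)%N = #|F|.
Proof.
rewrite -sum1_card [RHS](partition_big (fun r => r ^+ 2) xpredT) //=.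
by apply: eq_bigr => d _; rewrite sum1dep_card.
Qed.

Lemma card_sqrts_distribution : 2 != 0 :> F ->
  let D k := #|[set d : F | #|sqrts d| == k]| in
  [/\ D 1%N = 1%N, D 0%N = D 2%N & (1 + D 2%N * 2)%N = #|F|].
Proof.
move=> h2 D.
have D_sum k : D k = (\sum_(d : F) (#|sqrts d| == k))%N.
  by rewrite /D -sum1dep_card big_mkcond; apply: eq_bigr => d _; case: eqP.
have D1 : D 1%N = 1%N.
  rewrite -[RHS](cards1 (0 : F)); apply: eq_card => d; rewrite !inE card_sqrts //.
  by case: (d == 0) => //; case: ifP.
have sqrts_le2 d : (#|sqrts d| <= 2)%N.
  by rewrite card_sqrts //; case: (d == 0) => //; case: ifP.
have D_total : (D 0%N + 1 + D 2%N)%N = #|F|.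
  transitivity (\sum_(d : F) ((#|sqrts d| == 0) + (#|sqrts d| == 1) + (#|sqrts d| == 2)))%N.
    by rewrite !big_split /= -!D_sum D1.
  rewrite -sum1_card; apply: eq_bigr => d _.
  by case: #|sqrts d| (sqrts_le2 d) => [|[|[|]]].
have D_roots : (1 + D 2%N * 2)%N = #|F|.
  transitivity (\sum_(d : F) ((#|sqrts d| == 1) + (#|sqrts d| == 2) * 2))%N.
    by rewrite big_split -big_distrl /= -!D_sum D1.
  rewrite -sum_card_sqrts; apply: eq_bigr => d _.
  by case: #|sqrts d| (sqrts_le2 d) => [|[|[|]]].
by split=> //; lia.
Qed.

End SquareRoots.

Lemma card_fibrewise_injective (A B V : finType) (c : pred A) (f : A -> V -> B -> B)
    (P : pred B) :
  (forall a u, c a -> injective (f a u)) ->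
  #|[set t : A * B * V | c t.1.1 && P (f t.1.1 t.2 t.1.2)]| =
  (#|[set a | c a]| * #|V| * #|[set b | P b]|)%N.
Proof.
move=> f_inj; rewrite -[LHS]sum1dep_card big_mkcond /=.
rewrite -(pair_bigA _ (fun ab u => if c ab.1 && P (f ab.1 u ab.2) then 1 else 0)%N) /=.
rewrite -(pair_bigA _ (fun a b => \sum_u if c a && P (f a u b) then 1 else 0)%N) /=.
rewrite -sum1dep_card !big_distrl [RHS]big_mkcond /=; apply: eq_bigr => a _.
case: (boolP (c a)) => [ca | _]; last by rewrite big1 // => b _; rewrite big1.
rewrite exchange_big !mul1n -sum_nat_const; apply: eq_bigr => u _.
by rewrite -sum1dep_card [RHS](reindex_inj (f_inj a u ca)) [RHS]big_mkcond.
Qed.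

Section RootParametrization.
Variables (F : fieldType) (x1 x2 y1 y2 v : F).
Hypotheses (y1_neq0 : y1 != 0) (y2_neq0 : y2 != 0) (y12_neq0 : y1 + y2 != 0).

Definition disc_root (b1 : F) : F := y1 * (y1 + y2) * b1 - (v * y1 + x2 * y1 - x1 * y2).

Definition sol_of_root (r : F) : F * F :=
  ((v * y1 + x2 * y1 - x1 * y2 + r) / (y1 * (y1 + y2)),
   (v * y2 + x1 * y2 - x2 * y1 - r) / (y2 * (y1 + y2))).

Lemma eq_line (b1 b2 : F) : (b1 * y1 + b2 * y2 == v) = (b2 == (v - b1 * y1) / y2).
Proof. by apply/eqP/eqP => [<- | ->]; field. Qed.

Lemma disc_root_sol (r : F) : disc_root (sol_of_root r).1 = r.
Proof. by rewrite /disc_root /=; field; rewrite y1_neq0 y12_neq0. Qed.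

Lemma sol_of_root_line (r : F) : (sol_of_root r).2 = (v - (sol_of_root r).1 * y1) / y2.
Proof. by rewrite /=; field; rewrite y1_neq0 y2_neq0 y12_neq0. Qed.

Lemma sol_of_disc_root (b1 : F) : sol_of_root (disc_root b1) = (b1, (v - b1 * y1) / y2).
Proof.
by rewrite /sol_of_root /disc_root; congr (_, _); field; rewrite ?y1_neq0 ?y2_neq0 ?y12_neq0.
Qed.

End RootParametrization.

Section QuadraticSystem.
Variables (p : nat) (s x1 x2 y1 y2 w v : 'F_p).
Hypotheses (hs : - (2 * s) = 1)
  (y1_neq0 : y1 != 0) (y2_neq0 : y2 != 0) (y12_neq0 : y1 + y2 != 0).

Lemma completed_square (b1 b2 : 'F_p) : b1 * y1 + b2 * y2 = v ->
  disc_root x1 x2 y1 y2 v b1 ^+ 2 - Delta x1 x2 y1 y2 w v =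
  2 * y2 * (y1 * (y1 + y2)) *
  (b1 * x1 + s * b1 * (1 - b1) * y1 + b2 * x2 + s * b2 * (1 - b2) * y2 - w).
Proof.
have h2 := two_neq0_of_half hs.
have -> : s = - 2^-1.
  by apply: (mulfI h2); rewrite mulrN divff //; apply: oppr_inj; rewrite hs opprK.
move=> /(canRL (addKr (b1 * y1))) /(canRL (mulfK y2_neq0)) ->.
by rewrite /Delta /disc_root; field; rewrite y2_neq0 h2.
Qed.

Lemma in_solset (b : 'F_p * 'F_p) :
  (b \in solset s x1 x2 y1 y2 w v) =
  (b.2 == (v - b.1 * y1) / y2) &&
  (disc_root x1 x2 y1 y2 v b.1 ^+ 2 == Delta x1 x2 y1 y2 w v).
Proof.
case: b => b1 b2; rewrite inE /= andbC eq_line //.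
case: eqP => //= b2E.
have on_line : b1 * y1 + b2 * y2 = v by apply/eqP; rewrite eq_line // b2E.
rewrite -subr_eq0 -[RHS]subr_eq0 (completed_square on_line) !mulf_eq0.
by rewrite (negbTE (two_neq0_of_half hs)) (negbTE y1_neq0) (negbTE y2_neq0) (negbTE y12_neq0).
Qed.

Lemma solset_sol_of_root :
  solset s x1 x2 y1 y2 w v = sol_of_root x1 x2 y1 y2 v @: sqrts (Delta x1 x2 y1 y2 w v).
Proof.
apply/setP => b; rewrite in_solset; apply/andP/imsetP => [[/eqP b2E hb1] | [r hr ->]].
  exists (disc_root x1 x2 y1 y2 v b.1); first by rewrite inE.
  by rewrite sol_of_disc_root // -b2E -surjective_pairing.
by move: hr; rewrite inE -sol_of_root_line // disc_root_sol // => ->.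
Qed.

Lemma card_solset : #|solset s x1 x2 y1 y2 w v| = #|sqrts (Delta x1 x2 y1 y2 w v)|.
Proof.
rewrite solset_sol_of_root card_imset // => r1 r2 eq12.
by rewrite -(disc_root_sol x1 x2 v y1_neq0 y12_neq0 r1) eq12 disc_root_sol.
Qed.

End QuadraticSystem.

Lemma Delta_injective_w (p : nat) (x1 x2 y1 y2 v : 'F_p) :
  2 != 0 :> 'F_p -> y1 != 0 -> y2 != 0 -> y1 + y2 != 0 ->
  injective (fun w => Delta x1 x2 y1 y2 w v).
Proof.
move=> h2 y1_neq0 y2_neq0 y12_neq0 w1 w2 /eqP; rewrite -subr_eq0.
have -> : Delta x1 x2 y1 y2 w1 v - Delta x1 x2 y1 y2 w2 v =
          2 * y1 * (y1 + y2) * y2 * (w1 - w2).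
  by rewrite /Delta; ring.
rewrite !mulf_eq0 (negbTE h2) (negbTE y1_neq0) (negbTE y2_neq0) (negbTE y12_neq0).
by rewrite subr_eq0 => /eqP.
Qed.

Section UniformSample.
Variables (p : nat) (s : 'F_p).
Hypothesis hs : - (2 * s) = 1.

Definition tup_Delta (t : tup p) : 'F_p :=
  let: (x1, x2, y1, y2, w, v) := t in Delta x1 x2 y1 y2 w v.

Let nonzero_ys (a : 'F_p * 'F_p * 'F_p * 'F_p) :=
  [&& a.1.2 != 0, a.2 != 0 & a.1.2 + a.2 != 0].

Lemma card_condev_Delta (P : pred 'F_p) :
  #|[set t in condev p | P (tup_Delta t)]| =
  (#|[set a | nonzero_ys a]| * #|'F_p| * #|[set d | P d]|)%N.
Proof.
rewrite -(card_fibrewise_injective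
           (f := fun a u w => Delta a.1.1.1 a.1.1.2 a.1.2 a.2 w u)) => [|a u].
  by apply: eq_card => -[[[[[x1 x2] y1] y2] w] v]; rewrite !inE.
case/and3P => y1_neq0 y2_neq0 y12_neq0.
exact: Delta_injective_w (two_neq0_of_half hs) y1_neq0 y2_neq0 y12_neq0.
Qed.

Lemma eta_ev_condev k :
  eta_ev s k :&: condev p = [set t in condev p | #|sqrts (tup_Delta t)| == k].
Proof.
apply/setP => -[[[[[x1 x2] y1] y2] w] v]; rewrite !inE andbC.
by case: (boolP [&& _, _ & _]) => // /and3P[h1 h2 h12]; rewrite /eta card_solset.
Qed.

Lemma cond_prob_sqrts k :
  cond_prob s k = #|[set d : 'F_p | #|sqrts d| == k]|%:R / #|'F_p|%:R.
Proof.
have card_condev : #|condev p| = (#|[set a | nonzero_ys a]| * #|'F_p| * #|'F_p|)%N.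
  transitivity #|[set t in condev p | predT (tup_Delta t)]|.
    by apply: eq_card => t; rewrite !inE andbT.
  by rewrite card_condev_Delta; congr (_ * _)%N; apply: eq_card => d; rewrite inE.
have nonzero_ys_gt0 : (0 < #|[set a | nonzero_ys a]|)%N.
  apply/card_gt0P; exists (0, 0, 1, 1); rewrite inE /nonzero_ys /=.
  exact: two_neq0_of_half hs.
have F_gt0 : (0 < #|'F_p|)%N by apply/card_gt0P; exists 0.
rewrite /cond_prob eta_ev_condev (card_condev_Delta (fun d => #|sqrts d| == k)) card_condev.
rewrite [X in X / _]natrM [X in _ / X]natrM invfM mulrACA divff ?mul1r //.
by rewrite pnatr_eq0 -lt0n muln_gt0 nonzero_ys_gt0.
Qed.

End UniformSample.

Lemma half_sub_div_odd (F : numFieldType) (c : nat) :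
  (c%:R / (1 + c * 2)%:R : F) = 1 / 2 - 1 / (2 * (1 + c * 2)%:R).
Proof.
have odd_neq0 : ((1 + c * 2)%:R : F) != 0 by rewrite pnatr_eq0.
by move: odd_neq0; rewrite natrD natrM => odd_neq0; field; rewrite odd_neq0.
Qed.

Theorem mainTheorem9 (p : nat) (hp : prime p) (hodd : odd p) (s : 'F_p)
  (hs : - (2 * s) = 1) :
  (forall x1 x2 y1 y2 w v : 'F_p,
     y1 != 0 -> y2 != 0 -> y1 + y2 != 0 ->
     [/\ (Delta x1 x2 y1 y2 w v != 0 -> is_square (Delta x1 x2 y1 y2 w v) ->
            eta s x1 x2 y1 y2 w v = 2%N /\
            forall r : 'F_p, r ^+ 2 = Delta x1 x2 y1 y2 w v ->
              solset s x1 x2 y1 y2 w v =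
              [set ((v * y1 + x2 * y1 - x1 * y2 + r) / (y1 * (y1 + y2)),
                    (v * y2 + x1 * y2 - x2 * y1 - r) / (y2 * (y1 + y2)));
                   ((v * y1 + x2 * y1 - x1 * y2 - r) / (y1 * (y1 + y2)),
                    (v * y2 + x1 * y2 - x2 * y1 + r) / (y2 * (y1 + y2)))]),
         (Delta x1 x2 y1 y2 w v = 0 -> eta s x1 x2 y1 y2 w v = 1%N) &
         (~ is_square (Delta x1 x2 y1 y2 w v) -> eta s x1 x2 y1 y2 w v = 0%N)])
  /\
  [/\ cond_prob s 0 = 1 / 2 - 1 / (2 * p%:R),
      cond_prob s 2 = 1 / 2 - 1 / (2 * p%:R) &
      cond_prob s 1 = 1 / p%:R].
Proof.
have two_neq0 := two_neq0_of_half hs.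
split=> [x1 x2 y1 y2 w v y1_neq0 y2_neq0 y12_neq0 | ].
  rewrite /eta card_solset //; split.
  - move=> D_neq0 [r hr]; split.
      rewrite -hr card_sqrts_sqr //; apply: contraNneq D_neq0 => r0.
      by rewrite -hr r0 expr0n.
    move=> {}r {}hr; rewrite solset_sol_of_root // -hr sqrts_sqr imsetU1 imset_set1.
    by rewrite /sol_of_root opprK.
  - by move=> ->; rewrite sqrts0 cards1.
  - move=> nsq; rewrite sqrts_nonsquare ?cards0 // => r.
    by apply/eqP => hr; apply: nsq; exists r.
have [D1 D0 D2] := card_sqrts_distribution two_neq0.
rewrite (card_Fp hp) in D2.
rewrite !cond_prob_sqrts // D0 D1 (card_Fp hp).
set c := #|_| in D2 *.
by rewrite -D2 half_sub_div_odd.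
Qed.
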